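(* Let $\mathbb{N}\subseteq\mathbb{R}^n$ be a linear subspace. There exists a constant $C(\mathbb{N})<1$ such that for all ${\bm a},{\bm b}\in\mathbb{R}^n$ and ${\bm r}\in\mathbb{N}$ with $\operatorname{sgn}({\bm a})=\operatorname{sgn}({\bm b})$ (componentwise, with $\operatorname{sgn}(0)=0$) and ${\bm b}\in\mathbb{N}^\perp$, we have $|\langle{\bm r},{\bm a}\rangle|\le C(\mathbb{N})\|{\bm r}\|_2\|{\bm a}\|_2$. *)

From HB Require Import structures.
From mathcomp Require Import all_boot all_order all_algebra.
From mathcomp Require Import reals.
Set Implicit Arguments. Unset Strict Implicit. Unset Printing Implicit Defensive.
Import Order.TTheory GRing.Theory Num.Theory.
Local Open Scope ring_scope.

Definition dotv (R : realType) (n : nat) (u v : 'rV[R]_n) : R :=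
  \sum_(i < n) u 0 i * v 0 i.

Definition norm2 (R : realType) (n : nat) (u : 'rV[R]_n) : R :=
  Num.sqrt (dotv u u).

Definition in_perp (R : realType) (n : nat) (N : {vspace 'rV[R]_n}) (b : 'rV[R]_n) : Prop :=
  forall v, v \in N -> dotv v b = 0.

Definition same_sign (R : realType) (n : nat) (a b : 'rV[R]_n) : Prop :=
  forall i : 'I_n, Num.sg (a 0 i) = Num.sg (b 0 i).

(* Fix a sign pattern p in {-,0,+}^n realised by some b in N^perp.  If a has
   the same signs as b, every product a_i b_i is nonnegative and the nonzero
   |b_i| are bounded below, so <a,b>^2 >= e |a|^2 |b|^2 for some e > 0
   depending only on b.  Removing from a its component along b does not change
   <r,a> for r in N, and shrinks |a|^2 to at most (1 - e)|a|^2; Cauchy-Schwarz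
   gives |<r,a>| <= sqrt(1 - e) |r| |a|.  Choosing one such b per pattern, the
   finitely many thresholds have a common positive lower bound. *)
From HB Require Import structures.
From mathcomp Require Import all_boot all_order all_algebra.
From mathcomp Require Import reals.
From mathcomp Require Import ring lra.
From Stdlib Require Import Classical.
Set Implicit Arguments. Unset Strict Implicit. Unset Printing Implicit Defensive.
Import Order.TTheory GRing.Theory Num.Theory.
Local Open Scope ring_scope.

Section RealDomain.
Variable R : realDomainType.

Lemma ex_common_threshold (T : finType) (Q : T -> R -> Prop) :
  (forall t e e', e' <= e -> Q t e -> Q t e') ->
  (forall t, exists2 e, 0 < e & Q t e) ->
  exists2 e, 0 < e & forall t, Q t e.
Proof.
move=> Qdown Qex.
suff [e e_gt0 Qe] : exists2 e, 0 < e & forall t, t \in enum T -> Q t e.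
  by exists e => // t; apply: Qe; rewrite mem_enum.
elim: (enum T) => [|t s [e1 e1_gt0 IH]]; first by exists 1.
have [e2 e2_gt0 Qt] := Qex t.
exists (Num.min e1 e2); first by rewrite lt_min e1_gt0 e2_gt0.
move=> u; rewrite inE => /orP[/eqP-> | us].
- by apply: Qdown Qt; rewrite ge_min lexx orbT.
- by apply: Qdown (IH u us); rewrite ge_min lexx.
Qed.

Lemma same_sign_mul_ge0 (x y : R) : Num.sg x = Num.sg y -> 0 <= x * y.
Proof. by move=> xy; rewrite -sgr_ge0 sgrM xy -expr2 sqr_ge0. Qed.

Lemma same_sign_eq0 (x y : R) : Num.sg x = Num.sg y -> (x == 0) = (y == 0).
Proof. by move=> xy; rewrite -sgr_eq0 xy sgr_eq0. Qed.

Lemma sumr_sqr_le (I : finType) (F : I -> R) :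
  (forall i, 0 <= F i) -> \sum_i F i ^+ 2 <= (\sum_i F i) ^+ 2.
Proof.
move=> F_ge0; rewrite [X in _ <= X]expr2 mulr_suml; apply: ler_sum => i _.
by rewrite expr2 ler_wpM2l // (bigD1 i) //= lerDl sumr_ge0.
Qed.

End RealDomain.

Section InnerProduct.
Variables (R : realType) (n : nat).
Implicit Types u v w : 'rV[R]_n.

Lemma dotvC u v : dotv u v = dotv v u.
Proof. by apply: eq_bigr => i _; rewrite mulrC. Qed.

Lemma dotv0r u : dotv u 0 = 0.
Proof. by apply: big1 => i _; rewrite mxE mulr0. Qed.

Lemma dotvDr u v w : dotv u (v + w) = dotv u v + dotv u w.
Proof. by rewrite /dotv -big_split; apply: eq_bigr => i _; rewrite mxE mulrDr. Qed.

Lemma dotvZr u k v : dotv u (k *: v) = k * dotv u v.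
Proof. by rewrite /dotv mulr_sumr; apply: eq_bigr => i _; rewrite mxE mulrCA. Qed.

Lemma dotvBr u v w : dotv u (v - w) = dotv u v - dotv u w.
Proof. by rewrite dotvDr -scaleN1r dotvZr mulN1r. Qed.

Lemma dotvZl u k v : dotv (k *: v) u = k * dotv v u.
Proof. by rewrite dotvC dotvZr dotvC. Qed.

Lemma dotvBl u v w : dotv (v - w) u = dotv v u - dotv w u.
Proof. by rewrite dotvC dotvBr !(dotvC u). Qed.

Lemma dotvv_ge0 u : 0 <= dotv u u.
Proof. by apply: sumr_ge0 => i _; rewrite -expr2 sqr_ge0. Qed.

Lemma dotvv_eq0 u : (dotv u u == 0) = (u == 0).
Proof.
apply/idP/eqP => [|->]; last by rewrite dotv0r.
rewrite psumr_eq0 => [/allP u0|i _]; last by rewrite -expr2 sqr_ge0.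
apply/rowP => i; rewrite mxE.
by have := u0 i (mem_index_enum _); rewrite /= -expr2 sqrf_eq0 => /eqP.
Qed.

Lemma dotvv_gt0 u : u != 0 -> 0 < dotv u u.
Proof. by rewrite lt_def dotvv_eq0 dotvv_ge0 andbT. Qed.

Lemma dotv_sqr_le u v : dotv u v ^+ 2 <= dotv u u * dotv v v.
Proof.
have [->|v0] := eqVneq v 0; first by rewrite !dotv0r expr0n mulr0.
have vv_gt0 := dotvv_gt0 v0.
(* 0 <= |vv u - uv v|^2 = vv (uu vv - uv^2) *)
have := dotvv_ge0 (dotv v v *: u - dotv u v *: v).
rewrite !dotvBl !dotvBr !dotvZl !dotvZr (dotvC v u).
have -> : dotv v v * (dotv v v * dotv u u) - dotv v v * (dotv u v * dotv u v)
    - (dotv u v * (dotv v v * dotv u v) - dotv u v * (dotv u v * dotv v v))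
  = dotv v v * (dotv u u * dotv v v - dotv u v ^+ 2) by ring.
by rewrite pmulr_rge0 // subr_ge0.
Qed.

Lemma sqr_dotv_orth_le (r a b : 'rV[R]_n) (e : R) :
  dotv r b = 0 -> b != 0 -> e * dotv a a * dotv b b <= dotv a b ^+ 2 ->
  dotv r a ^+ 2 <= (1 - e) * dotv r r * dotv a a.
Proof.
move=> rb b0 angle; have bb_gt0 := dotvv_gt0 b0.
set t := dotv a b / dotv b b.
have ra : dotv r (a - t *: b) = dotv r a by rewrite dotvBr dotvZr rb mulr0 subr0.
have residual : dotv (a - t *: b) (a - t *: b) = dotv a a - dotv a b ^+ 2 / dotv b b.
  by rewrite !dotvBl !dotvBr !dotvZl !dotvZr (dotvC b a) /t; field; rewrite gt_eqF.
have shrink : dotv a a - dotv a b ^+ 2 / dotv b b <= (1 - e) * dotv a a.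
  by rewrite mulrBl mul1r lerD2l lerN2 ler_pdivlMr.
rewrite -ra; apply: le_trans (dotv_sqr_le _ _) _.
by rewrite residual [_ * (_ - _)]mulrC [X in _ <= X]mulrAC ler_wpM2r ?dotvv_ge0.
Qed.

End InnerProduct.

Section SignPatterns.
Variables (R : realType) (n : nat).
Implicit Types a b : 'rV[R]_n.

Definition sign_pattern a : {ffun 'I_n -> bool * bool} :=
  [ffun i => (0 < Num.sg (a 0 i), Num.sg (a 0 i) < 0)].

Lemma same_signP a b : same_sign a b <-> sign_pattern a = sign_pattern b.
Proof.
split=> [ab | /ffunP ab i].
  by apply/ffunP => i; rewrite !ffunE ab.
move: (ab i); rewrite !ffunE.
by case: sgrP => _; case: sgrP => _; rewrite ?ltr01 ?ltrN10 ?ltr0N1 ?ltxx ?ltr10 // => -[].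
Qed.

Definition sign_cone_bound b (e : R) :=
  forall a, same_sign a b -> e * dotv a a * dotv b b <= dotv a b ^+ 2.

Lemma sign_cone_boundW b (e e' : R) :
  e' <= e -> sign_cone_bound b e -> sign_cone_bound b e'.
Proof.
move=> e'e be a ab; apply: le_trans (be a ab).
by rewrite !ler_wpM2r ?dotvv_ge0.
Qed.

Lemma ex_sign_cone_bound b : exists2 e, 0 < e & sign_cone_bound b e.
Proof.
have [->|b0] := eqVneq b 0.
  by exists 1 => // a _; rewrite dotv0r mulr0 sqr_ge0.
have [m m_gt0 bm] : exists2 m, 0 < m & forall i, b 0 i != 0 -> m <= b 0 i ^+ 2.
  apply: ex_common_threshold => [i m m' m'm bm /bm|i]; first exact: le_trans.
  have [bi0|bi0] := eqVneq (b 0 i) 0; first by exists 1; rewrite ?bi0 ?eqxx.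
  by exists (b 0 i ^+ 2); rewrite // exprn_even_gt0.
have bb_gt0 := dotvv_gt0 b0.
exists (m / dotv b b); first by rewrite divr_gt0.
move=> a ab; rewrite mulrAC divfK ?gt_eqF //.
(* <a,b>^2 = (sum a_i b_i)^2 >= sum (a_i b_i)^2 >= m sum a_i^2 *)
apply: le_trans (sumr_sqr_le (fun i => same_sign_mul_ge0 (ab i))).
rewrite mulr_sumr; apply: ler_sum => i _.
have [bi0|bi0] := eqVneq (b 0 i) 0.
  by move/eqP: (bi0); rewrite -(same_sign_eq0 (ab i)) => /eqP->; rewrite !mul0r mulr0 sqr_ge0.
by rewrite exprMn -expr2 mulrC ler_wpM2l ?sqr_ge0 ?bm.
Qed.

Lemma ex_uniform_sign_cone_bound (N : {vspace 'rV[R]_n}) :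
  exists2 e, 0 < e & forall a b, in_perp N b -> same_sign a b ->
    exists b', [/\ in_perp N b', same_sign a b' & sign_cone_bound b' e].
Proof.
pose Q p e := (exists b, in_perp N b /\ sign_pattern b = p) ->
  exists b, [/\ in_perp N b, sign_pattern b = p & sign_cone_bound b e].
have [e e_gt0 Qe] : exists2 e, 0 < e & forall p, Q p e.
  apply: ex_common_threshold => [p e e' e'e Qp /Qp [b [Nb bp be]] | p].
    by exists b; split=> //; apply: sign_cone_boundW be.
  have [[b [Nb bp]] | noB] := classic (exists b, in_perp N b /\ sign_pattern b = p).
    have [e e_gt0 be] := ex_sign_cone_bound b.
    by exists e => // _; exists b.
  by exists 1 => // /noB.
exists e => // a b Nb /same_signP ab.
have [|b' [Nb' b'a b'e]] := Qe (sign_pattern a); first by exists b.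
by exists b'; split=> //; apply/same_signP.
Qed.

End SignPatterns.

Theorem mainTheorem6 (R : realType) (n : nat) (N : {vspace 'rV[R]_n}) :
  exists C : R, C < 1 /\
    forall a b r : 'rV[R]_n,
      r \in N -> same_sign a b -> in_perp N b ->
      `|dotv r a| <= C * norm2 r * norm2 a.
Proof.
have [e0 e0_gt0 uniform] := ex_uniform_sign_cone_bound N.
pose e := Num.min e0 1.
have e_gt0 : 0 < e by rewrite lt_min e0_gt0 ltr01.
have e_le1 : e <= 1 by rewrite ge_min lexx orbT.
exists (Num.sqrt (1 - e)); split.
  by rewrite -[X in _ < X]sqrtr1 ltr_sqrt ?ltr01 //; lra.
move=> a b r rN ab Nb.
have [b' [Nb' ab' b'e0]] := uniform a b Nb ab.
have [b'0|b'0] := eqVneq b' 0.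
  have -> : a = 0.
    by apply/rowP => i; apply/eqP; rewrite mxE (same_sign_eq0 (ab' i)) b'0 mxE.
  by rewrite dotv0r normr0 /norm2 !mulr_ge0 ?sqrtr_ge0.
have b'e : sign_cone_bound b' e by apply: sign_cone_boundW b'e0; rewrite ge_min lexx.
have := sqr_dotv_orth_le (Nb' r rN) b'0 (b'e a ab').
rewrite /norm2 -!sqrtrM ?subr_ge0 ?mulr_ge0 ?dotvv_ge0 ?subr_ge0 // => key.
by rewrite -sqrtr_sqr ler_sqrt // !mulr_ge0 ?dotvv_ge0 ?subr_ge0.
Qed.
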